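(* Let $d\ge 1$ and let $\mathcal{G}'$ be a $d$-tree decomposition with $\mathcal{G}'\neq\mathcal{K}_1$. Then there exists a $d$-tree decomposition $\mathcal{G}$ such that $\mathcal{G}'$ is obtained from $\mathcal{G}$ by a $d$-tree $j$-extension for some $0\le j\le d-1$.
   Context: A multi-graph is finite and loop-free, possibly with parallel edges. A $d$-tree decomposition is a tuple $\mathcal{G}=(G;T_1,\ldots,T_d)$ where $G$ is a multi-graph and $T_1,\ldots,T_d$ are spanning trees of $G$ whose edge sets partition $E(G)$ (distinct parallel edges are distinct edges). By convention, $\mathcal{K}_1=(K_1;T_1,\ldots,T_d)$, where $K_1$ is the graph with one vertex and no edges and all $T_i$ are edgeless, is a $d$-tree decomposition. For a multi-graph $G$, a $d$-dimensional $j$-extension forms $G'$ by deleting a set $F$ of $j$ edges of $G$ and adding a new vertex $v$ together with $d+j$ new edges joining $v$ to vertices of $G$ (parallel new edges allowed), such that every endpoint of an edge of $F$ is a neighbour of $v$ in $G'$ (for $d=1$ any $j\ge0$ is allowed). A $d$-tree decomposition $\mathcal{G}'=(G';T_1',\ldots,T_d')$ is obtained from $\mathcal{G}=(G;T_1,\ldots,T_d)$ by a $d$-tree $j$-extension ($0\le j\le d-1$) if $G'$ is obtained from $G$ by a $d$-dimensional $j$-extension adding a new vertex $v$, and for each $i$, $T_i'$ is obtained from $T_i$ by a $1$-dimensional $k_i$-extension adding the same vertex $v$, for some $0\le k_i\le d-1$ (so $\sum_i k_i=j$). *)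

From mathcomp Require Import all_boot.
Set Implicit Arguments. Unset Strict Implicit. Unset Printing Implicit Defensive.

(* A multi-graph on a vertex set [Vs : {set V}] is given by a list of edges;
   distinct positions in the list are distinct edges (so parallel edges are
   allowed).  An edge (a,b) is an unordered pair; its orientation in the list
   is irrelevant.  Coloured edges [((a,b),i)] record the tree [T_i] the edge
   belongs to, so a list of coloured edges is a multigraph together with a
   partition of its edge set into d classes. *)

Definition cedge (V : finType) (d : nat) := ((V * V) * 'I_d)%type.

Definition adj (V : finType) (E : seq (V * V)) : rel V :=
  fun a b => ((a, b) \in E) || ((b, a) \in E).

Definition is_multigraph (V : finType) (Vs : {set V}) (E : seq (V * V)) : Prop :=
  forall e, e \in E -> [/\ e.1 \in Vs, e.2 \in Vs & e.1 != e.2].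

Definition mconnected (V : finType) (Vs : {set V}) (E : seq (V * V)) : Prop :=
  Vs != set0 /\ forall x y, x \in Vs -> y \in Vs -> connect (adj E) x y.

(* A tree: a connected multigraph that is minimally connected, i.e. deleting
   any single edge (one copy, if parallel) disconnects it (equivalently: a
   connected multigraph without cycles, 2-cycles of parallel edges included). *)
Definition is_tree (V : finType) (Vs : {set V}) (E : seq (V * V)) : Prop :=
  [/\ is_multigraph Vs E, mconnected Vs E &
      forall e, e \in E -> ~ mconnected Vs (rem e E)].

Definition colour_class (V : finType) (d : nat) (E : seq (cedge V d)) (i : 'I_d)
  : seq (V * V) := [seq e.1 | e <- E & e.2 == i].

Definition is_dtd (d : nat) (V : finType) (Vs : {set V}) (E : seq (cedge V d)) : Prop :=
  is_multigraph Vs [seq e.1 | e <- E] /\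
  forall i : 'I_d, is_tree Vs (colour_class E i).

Definition is_K1 (d : nat) (V : finType) (Vs : {set V}) (E : seq (cedge V d)) : Prop :=
  #|Vs| = 1 /\ E = [::].

Definition ends (V : finType) (e : V * V) : seq V := [:: e.1; e.2].

(* (Vs', E') is obtained from (Vs, E) by a d-tree j-extension adding vertex v:
   - Vs' = Vs + v with v new;
   - E = F ++ R as multisets (F, the |F| = j deleted edges), and
     E' = R ++ N as multisets, where N are the d+j new edges, each joining v to
     a vertex of G;
   - for each colour i, T_i' arises from T_i by a 1-dimensional k_i-extension
     adding v: k_i = #(F of colour i) <= d-1 edges deleted, 1 + k_i new edges
     of colour i added at v, and every endpoint of a deleted edge of colour i is
     a neighbour of v in T_i' (via a new edge of colour i).
   Summing over colours gives |N| = d + j and the neighbour condition for G'. *)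
Definition dtree_ext (d j : nat) (V : finType)
  (Vs : {set V}) (E : seq (cedge V d)) (Vs' : {set V}) (E' : seq (cedge V d)) : Prop :=
  exists (v : V) (F R N : seq (cedge V d)),
  [/\ v \notin Vs /\ Vs' = v |: Vs,
      perm_eq E (F ++ R) /\ perm_eq E' (R ++ N),
      size F = j /\ size N = d + j,
      (forall e, e \in N ->
         (e.1.1 == v /\ e.1.2 \in Vs) \/ (e.1.2 == v /\ e.1.1 \in Vs)) &
      forall i : 'I_d,
        [/\ size (colour_class F i) <= d - 1,
            size (colour_class N i) = (size (colour_class F i)).+1 &
            forall u, u \in flatten [seq ends e | e <- colour_class F i] ->
              u \in flatten [seq ends e | e <- colour_class N i]]].

From mathcomp Require Import all_boot zify.
Set Implicit Arguments. Unset Strict Implicit. Unset Printing Implicit Defensive.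

(* A forest on n vertices has at most n - 1 edges, so G' has at most
   d (|V'| - 1) edges and its average degree is below 2d: some vertex v has
   degree d + j with j <= d - 1.  In each tree T_i', v has k_i + 1 >= 1
   neighbours; deleting v and joining the first neighbour to the other k_i by
   a star leaves a spanning tree T_i of G' - v.  Read backwards, this is a
   d-tree j-extension with j = sum k_i whose deleted edges are the stars. *)

Lemma rem_cat_l (T : eqType) (x : T) s1 s2 :
  x \in s1 -> rem x (s1 ++ s2) = rem x s1 ++ s2.
Proof.
elim: s1 => [|y s1 IH] //=; rewrite inE; case: (eqVneq x y) => //= _ xs.
by rewrite (IH xs).
Qed.

Lemma rem_cat_r (T : eqType) (x : T) s1 s2 :
  x \notin s1 -> rem x (s1 ++ s2) = s1 ++ rem x s2.
Proof.
elim: s1 => [|y s1 IH] //=; rewrite inE negb_or eq_sym => /andP[/negbTE -> xs].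
by rewrite (IH xs).
Qed.

Section Multigraphs.
Variable V : finType.
Implicit Types (E : seq (V * V)) (S A : {set V}) (u v : V).

Lemma adj_sym E : symmetric (adj E).
Proof. by move=> a b; rewrite /adj orbC. Qed.

Lemma connect_adjC E x y : connect (adj E) x y = connect (adj E) y x.
Proof. exact: (sym_connect_sym (@adj_sym E)). Qed.

Lemma connect_by_edges E1 E2 :
  (forall g, g \in E1 -> connect (adj E2) g.1 g.2) ->
  forall x y, connect (adj E1) x y -> connect (adj E2) x y.
Proof.
move=> H; apply: connect_sub => a b; rewrite /adj => /orP[] /H //=.
by rewrite connect_adjC.
Qed.

Lemma connect_edge E g : g \in E -> connect (adj E) g.1 g.2.
Proof. by move=> gE; apply: connect1; rewrite /adj -surjective_pairing gE. Qed.

Lemma connect_subset E1 E2 : {subset E1 <= E2} ->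
  forall x y, connect (adj E1) x y -> connect (adj E2) x y.
Proof. by move=> sub; apply: connect_by_edges => g /sub; apply: connect_edge. Qed.

Definition forest E := forall e, e \in E -> ~~ connect (adj (rem e E)) e.1 e.2.

Lemma connect_rem_edge E e : e \in E -> connect (adj (rem e E)) e.1 e.2 ->
  forall x y, connect (adj E) x y -> connect (adj (rem e E)) x y.
Proof.
move=> eE c; apply: connect_by_edges => g gE.
by have [-> //|ge] := eqVneq g e; apply: connect_edge; rewrite rem_mem.
Qed.

Lemma tree_forest S E : is_tree S E -> forest E.
Proof.
case=> _ [S0 conn] min e eE; apply/negP => c; apply: (min e eE); split => // x y xS yS.
exact: connect_rem_edge eE c _ _ (conn x y xS yS).
Qed.

Lemma forest_subseq E1 E2 : forest E2 -> subseq E1 E2 -> forest E1.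
Proof.
move=> f2 sub e eE1; apply/negP => c; move/negP: (f2 e (mem_subseq sub eE1)); apply.
exact: connect_subset (mem_subseq (subseq_rem e sub)) _ _ c.
Qed.

Lemma multigraph_filter_closed S A E : is_multigraph S E ->
  {in E, forall f, (f.1 \in A) = (f.2 \in A)} ->
  is_multigraph (S :&: A) [seq f <- E | f.1 \in A].
Proof.
move=> mg cl f; rewrite mem_filter => /andP[f1A fE]; have [f1 f2 f12] := mg f fE.
by rewrite !inE f1 f2 -(cl f fE) f1A.
Qed.

(* Remove one edge e: the vertices reachable from e.1 without e form a block A
   that no remaining edge leaves, and e.2 lies outside it; induct on both
   sides of A. *)
Lemma forest_size_lt_card S E :
  is_multigraph S E -> forest E -> S != set0 -> size E < #|S|.
Proof.
move: {2}(size E) (leqnn (size E)) => n; elim: n S E => [|n IH] S E.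
  by rewrite leqn0 size_eq0 => /eqP-> _ _; rewrite card_gt0.
case: E => [|e E] szE mg fE S0; first by rewrite card_gt0.
have mgE : is_multigraph S E by move=> f fin; apply: mg; rewrite inE fin orbT.
have fE' : forest E := forest_subseq fE (subseq_cons E e).
have [e1S e2S _] := mg e (mem_head e E).
have ne12 : ~~ connect (adj E) e.1 e.2 by have := fE e (mem_head e E); rewrite /= eqxx.
pose A := [set x | connect (adj E) e.1 x].
have clA : {in E, forall f, (f.1 \in A) = (f.2 \in A)}.
  move=> f fin; rewrite !inE; apply/idP/idP => h; apply: connect_trans h _.
    exact: connect_edge.
  by rewrite connect_adjC; apply: connect_edge.
have clAC : {in E, forall f, (f.1 \in ~: A) = (f.2 \in ~: A)}.
  by move=> f fin; rewrite !in_setC clA.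
have IHB (B : {set V}) : {in E, forall f, (f.1 \in B) = (f.2 \in B)} -> S :&: B != set0 ->
    size [seq f <- E | f.1 \in B] < #|S :&: B|.
  move=> clB SB0; apply: IH => //; last first.
  - exact: forest_subseq fE' (filter_subseq _ _).
  - exact: multigraph_filter_closed.
  - by rewrite size_filter (leq_trans (count_size _ _)).
have sizeE : size [seq f <- E | f.1 \in A] + size [seq f <- E | f.1 \in ~: A] = size E.
  rewrite !size_filter -[RHS](count_predC (fun f : V * V => f.1 \in A)).
  by congr addn; apply: eq_count => f; rewrite inE.
have cardS : #|S :&: A| + #|S :&: ~: A| = #|S| by rewrite -setDE cardsID.
have SA0 : S :&: A != set0 by apply/set0Pn; exists e.1; rewrite !inE e1S connect0.
have SAC0 : S :&: ~: A != set0 by apply/set0Pn; exists e.2; rewrite !inE e2S.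
by move: (IHB A clA SA0) (IHB _ clAC SAC0) => /=; lia.
Qed.

Definition incident v (e : V * V) := (e.1 == v) || (e.2 == v).
Definition other_end v (e : V * V) := if e.1 == v then e.2 else e.1.
Definition neighbours v E := [seq other_end v e | e <- E & incident v e].
Definition edges_avoiding v E := [seq e <- E | ~~ incident v e].
Definition star u (us : seq V) := [seq (u, w) | w <- us].

Definition degree v E := count (incident v) E.

Definition neighbour_star v E := star (head v (neighbours v E)) (behead (neighbours v E)).
Definition delete_vertex v E := neighbour_star v E ++ edges_avoiding v E.

Lemma size_neighbours v E : size (neighbours v E) = degree v E.
Proof. by rewrite size_map size_filter. Qed.

Lemma sum_degree S E : is_multigraph S E -> \sum_(w in S) degree w E = 2 * size E.
Proof.
have sum_eq1 x : x \in S -> \sum_(w in S) (x == w) = 1.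
  move=> xS; rewrite (bigD1 x) //= eqxx big1 // => w /andP[_ wx].
  by rewrite eq_sym (negbTE wx).
elim: E => [|e E IH] mg /=; first by rewrite big1.
rewrite big_split /= IH; last by move=> f fE; apply: mg; rewrite inE fE orbT.
have [e1 e2 e12] := mg e (mem_head _ _).
have -> : \sum_(w in S) incident w e = \sum_(w in S) ((e.1 == w) + (e.2 == w)).
  apply: eq_bigr => w _; rewrite /incident.
  by case: (eqVneq e.1 w) => [h|h]; case: (eqVneq e.2 w) => [h'|h'] //;
    move: e12; rewrite h h' eqxx.
by rewrite big_split /= !sum_eq1 //; lia.
Qed.

Lemma other_end_ends v e : other_end v e \in ends e.
Proof. by rewrite /other_end /ends; case: ifP => _; rewrite !inE eqxx ?orbT. Qed.

Lemma eq_other_end v e f : incident v e -> incident v f ->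
  other_end v e = other_end v f -> f = e \/ f = (e.2, e.1).
Proof.
case: e f => [a b] [c e]; rewrite /incident /other_end /=.
case: (eqVneq a v) => [->|av]; case: (eqVneq c v) => [->|cv] /=.
- by move=> _ _ ->; left.
- by move=> _ /eqP -> ->; right.
- by move=> /eqP -> _ ->; right.
- by move=> /eqP -> /eqP -> ->; left.
Qed.

Lemma adj_other_end E v f : f \in E -> incident v f -> adj E v (other_end v f).
Proof.
case: f => a b; rewrite /incident /other_end /adj /=.
case: (eqVneq a v) => [->|av] /= fE; first by rewrite fE.
by move/eqP=> bv; rewrite -bv fE orbT.
Qed.

Lemma adj_neighbour E1 E2 v u : u \in neighbours v E2 ->
  (forall h, h \in E2 -> incident v h -> other_end v h = u -> h \in E1) ->
  adj E1 v u.
Proof.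
move=> /mapP[h]; rewrite mem_filter => /andP[ih hE] -> H.
by apply: adj_other_end => //; apply: H.
Qed.

Lemma neighbours_sub S E v : is_multigraph S E -> {subset neighbours v E <= S :\ v}.
Proof.
move=> mg w /mapP[h]; rewrite mem_filter => /andP[ih hE] ->.
have [h1 h2 h12] := mg h hE; move: ih; rewrite /incident /other_end in_setD1.
case: (eqVneq h.1 v) => [hv|hv] /= _; first by rewrite h2 andbT -hv eq_sym.
by rewrite h1 hv.
Qed.

(* Two edges at v with the same other end would be parallel. *)
Lemma neighbours_uniq E v : forest E -> uniq (neighbours v E).
Proof.
elim: E => [|x E IH] // fE.
have := IH (forest_subseq fE (subseq_cons _ _)); rewrite /neighbours /=.
case ix: (incident v x) => /= ->; rewrite ?andbT //.
apply/mapP => -[y]; rewrite mem_filter => /andP[iy yE] h.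
have := fE x; rewrite inE eqxx /= eqxx => /(_ isT) /negP; apply; apply: connect1.
rewrite /adj; case: (eq_other_end ix iy h) => yx; rewrite yx in yE.
  by rewrite -surjective_pairing yE.
by case: (x) yE => a b /= ->; rewrite orbT.
Qed.

Lemma connect_to_neighbour E v x : x != v -> connect (adj E) x v ->
  exists2 w, w \in neighbours v E & connect (adj (edges_avoiding v E)) x w.
Proof.
move=> xv /connectP[p]; elim: p x xv => [|y p IH] x xv /=.
  by move=> _ xe; rewrite xe eqxx in xv.
move=> /andP[axy pth] lst.
have [yv|yv] := eqVneq y v.
  exists x; last exact: connect0.
  move: axy; rewrite yv /adj => /orP[] h.
    have -> : x = other_end v (x, v) by rewrite /other_end /= (negbTE xv).
    by apply: map_f; rewrite mem_filter h /incident /= eqxx orbT.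
  have -> : x = other_end v (v, x) by rewrite /other_end /= eqxx.
  by apply: map_f; rewrite mem_filter h /incident /= eqxx.
have [w wn c] := IH y yv pth lst; exists w => //.
apply: connect_trans c; apply: connect1; move: axy.
by rewrite /adj !mem_filter /incident /= (negbTE xv) (negbTE yv).
Qed.

Section DeleteVertex.
Variables (S : {set V}) (v : V) (T : seq (V * V)).
Hypotheses (vS : v \in S) (tT : is_tree S T).

Let fT : forest T := tree_forest tT.

Lemma connect_avoiding_neighbour x : x \in S :\ v ->
  exists2 w, w \in neighbours v T & connect (adj (edges_avoiding v T)) x w.
Proof.
case: tT => _ [_ conn] _; rewrite in_setD1 => /andP[xv xS].
exact: connect_to_neighbour (conn x v xS vS).
Qed.

Lemma neighbours_neq_nil : S :\ v != set0 -> neighbours v T != [::].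
Proof. by case/set0Pn => x /connect_avoiding_neighbour[w]; case: neighbours. Qed.

Section Star.
Variables (u0 : V) (us : seq V).
Hypothesis nbT : neighbours v T = u0 :: us.

Let uniq_nbT : uniq (u0 :: us).
Proof. by rewrite -nbT; apply: neighbours_uniq. Qed.

Lemma multigraph_delete_vertex :
  is_multigraph (S :\ v) (star u0 us ++ edges_avoiding v T).
Proof.
have [mg _ _] := tT; have nbS := neighbours_sub (v := v) mg; rewrite nbT in nbS.
have /andP[u0us _] := uniq_nbT.
move=> e; rewrite mem_cat => /orP[/mapP[u uus ->]|] /=.
  split; [exact: nbS (mem_head _ _) | by apply: nbS; rewrite inE uus orbT |].
  by apply/eqP => eu; rewrite eu uus in u0us.
rewrite mem_filter /incident negb_or => /andP[/andP[e1v e2v] eT].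
by have [e1 e2 e12] := mg e eT; rewrite !in_setD1 e1v e2v e1 e2.
Qed.

Lemma mconnected_delete_vertex : S :\ v != set0 ->
  mconnected (S :\ v) (star u0 us ++ edges_avoiding v T).
Proof.
move=> S0; split => // x y xS yS.
suff to_u0 z : z \in S :\ v -> connect (adj (star u0 us ++ edges_avoiding v T)) z u0.
  by apply: connect_trans (to_u0 x xS) _; rewrite connect_adjC; apply: to_u0.
move=> /connect_avoiding_neighbour[w]; rewrite nbT inE => wn c.
apply: (connect_trans (y := w)).
  by apply: connect_subset c => g; rewrite mem_cat orbC => ->.
case/orP: wn => [/eqP ->|wus]; first exact: connect0.
by rewrite connect_adjC; apply: (@connect_edge _ (u0, w)); rewrite mem_cat map_f.
Qed.

(* If the star edge (u0, u) could be dropped, then u0 and u would stay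
   connected, and with v ~ u0 so would be the ends v, u of the tree edge
   that (u0, u) replaces. *)
Lemma star_edge_bridge e : e \in star u0 us ->
  ~ mconnected (S :\ v) (rem e (star u0 us ++ edges_avoiding v T)).
Proof.
move=> eF [_ cE]; have /andP[u0us uniq_us] := uniq_nbT.
have eG : e \in star u0 us ++ edges_avoiding v T by rewrite mem_cat eF.
have [e1 e2 _] := multigraph_delete_vertex eG.
case/mapP: (eF) => u uus ee.
have : u \in neighbours v T by rewrite nbT inE uus orbT.
case/mapP=> f; rewrite mem_filter => /andP[fi fT'] fu.
have adj_v u' : u' \in u0 :: us -> u' != u -> adj (rem f T) v u'.
  move=> u'n u'u; apply: (@adj_neighbour _ T); first by rewrite nbT.
  move=> h hT hi hu'; apply: rem_mem => //.
  by apply/eqP => hf; rewrite -hu' hf -fu eqxx in u'u.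
have u0u : u0 != u by apply: contraNneq u0us => ->.
have cl g : g \in rem e (star u0 us ++ edges_avoiding v T) ->
    connect (adj (rem f T)) g.1 g.2.
  have uniq_star : uniq (star u0 us) by rewrite map_inj_uniq // => a b [].
  rewrite rem_cat_l // mem_cat (mem_rem_uniq _ uniq_star).
  rewrite inE => /orP[/andP[ge /mapP[u' u'us gu']]|].
    rewrite gu' /=; apply: (connect_trans (y := v)).
      by rewrite connect_adjC; apply: connect1; apply: adj_v; rewrite ?mem_head.
    apply: connect1; apply: adj_v; first by rewrite inE u'us orbT.
    by apply: contraNneq ge => u'u; rewrite gu' ee u'u.
  rewrite mem_filter => /andP[gi gT]; apply: connect_edge; rewrite rem_mem //.
  by apply: contraNneq gi => ->.
have cu : connect (adj (rem f T)) v u.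
  apply: (connect_trans (y := u0)); first by apply: connect1; apply: adj_v; rewrite ?mem_head.
  by have := connect_by_edges cl (cE _ _ e1 e2); rewrite ee.
move/negP: (fT fT'); apply.
move: fi fu cu; rewrite /incident /other_end.
by case: (eqVneq f.1 v) => [->|fv] /= => [_ ->|/eqP -> ->] //; rewrite connect_adjC.
Qed.

(* Dropping an edge e of T away from v cannot help: every remaining edge
   has its ends joined in T - e, through v for the star edges. *)
Lemma avoiding_edge_bridge e : e \notin star u0 us -> e \in edges_avoiding v T ->
  ~ mconnected (S :\ v) (rem e (star u0 us ++ edges_avoiding v T)).
Proof.
move=> eF eR [_ cE].
have eG : e \in star u0 us ++ edges_avoiding v T by rewrite mem_cat eR orbT.
have [e1 e2 _] := multigraph_delete_vertex eG.
move: (eR); rewrite mem_filter => /andP[ei eT].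
have adj_v u' : u' \in u0 :: us -> adj (rem e T) v u'.
  move=> u'n; apply: (@adj_neighbour _ T); first by rewrite nbT.
  move=> h hT hi _; rewrite rem_mem //; by apply: contraNneq ei => <-.
have cl g : g \in rem e (star u0 us ++ edges_avoiding v T) ->
    connect (adj (rem e T)) g.1 g.2.
  rewrite rem_cat_r // mem_cat => /orP[/mapP[u' u'us ->]|gR] /=.
    apply: (connect_trans (y := v)).
      by rewrite connect_adjC; apply: connect1; apply: adj_v; rewrite mem_head.
    by apply: connect1; apply: adj_v; rewrite inE u'us orbT.
  by apply: connect_edge; apply: mem_subseq gR; apply/subseq_rem/filter_subseq.
by move/negP: (fT eT); apply; apply: connect_by_edges cl _ _ (cE _ _ e1 e2).
Qed.

End Star.

Lemma is_tree_delete_vertex : S :\ v != set0 -> is_tree (S :\ v) (delete_vertex v T).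
Proof.
move=> S0; have := neighbours_neq_nil S0; rewrite /delete_vertex /neighbour_star.
case nbT : (neighbours v T) => [|u0 us] // _ /=.
split; [exact: multigraph_delete_vertex | exact: mconnected_delete_vertex |].
move=> e; case: (boolP (e \in star u0 us)) => [eF _|eF]; first exact: star_edge_bridge.
by rewrite mem_cat (negbTE eF); apply: avoiding_edge_bridge.
Qed.

End DeleteVertex.

End Multigraphs.

Section ColourClasses.
Variables (V : finType) (d : nat).
Implicit Types (E : seq (cedge V d)) (S : {set V}).

Definition tag_colour (i : 'I_d) (s : seq (V * V)) : seq (cedge V d) :=
  [seq (e, i) | e <- s].

Lemma sum_size_colour_class E : \sum_(i < d) size (colour_class E i) = size E.
Proof.
elim: E => [|x E IH]; first by rewrite big1.
have -> : \sum_(i < d) size (colour_class (x :: E) i) =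
          \sum_(i < d) ((x.2 == i) + size (colour_class E i)).
  by apply: eq_bigr => i _; rewrite /colour_class /=; case: (x.2 == i).
rewrite big_split /= IH (bigD1 x.2) //= eqxx big1 // => i /negbTE.
by rewrite eq_sym => ->.
Qed.

Lemma colour_class_cat E1 E2 i :
  colour_class (E1 ++ E2) i = colour_class E1 i ++ colour_class E2 i.
Proof. by rewrite /colour_class filter_cat map_cat. Qed.

Lemma colour_class_filter (p : pred (V * V)) E i :
  colour_class [seq e <- E | p e.1] i = [seq e <- colour_class E i | p e].
Proof.
rewrite /colour_class filter_map -!filter_predI; congr map.
by apply: eq_filter => e /=; rewrite andbC.
Qed.

Lemma colour_class_tag i s k :
  colour_class (tag_colour i s) k = if i == k then s else [::].
Proof.
elim: s => [|e s IH] /=; first by case: ifP.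
by move: IH; rewrite /colour_class /=; case: (i == k) => /= ->.
Qed.

Lemma colour_class_bigcat (s : 'I_d -> seq (V * V)) k :
  colour_class (\big[cat/[::]]_(i < d) tag_colour i (s i)) k = s k.
Proof.
rewrite (big_morph (fun E => colour_class E k) (fun E1 E2 => colour_class_cat E1 E2 k)
  (erefl : colour_class [::] k = [::])).
under eq_bigr => i _ do rewrite colour_class_tag.
by rewrite -(big_mkcond (fun i => i == k)) big_pred1_eq.
Qed.

Lemma multigraph_colour_classes S E :
  (forall i, is_multigraph S (colour_class E i)) -> is_multigraph S [seq e.1 | e <- E].
Proof.
move=> H x /mapP[e eE ->]; apply: (H e.2).
by apply: map_f; rewrite mem_filter eqxx.
Qed.

End ColourClasses.

Definition replaced_stars d (V : finType) v (E : seq (cedge V d)) :=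
  \big[cat/[::]]_(i < d) tag_colour i (neighbour_star v (colour_class E i)).

Definition delete_dtd_vertex d (V : finType) v (E : seq (cedge V d)) :=
  replaced_stars v E ++ [seq e <- E | ~~ incident v e.1].

Section DtreeDecomposition.
Variables (d : nat) (V : finType) (S : {set V}) (E : seq (cedge V d)).
Hypothesis dtdE : is_dtd S E.

Lemma size_dtd_le : size E <= d * (#|S| - 1).
Proof.
case: dtdE => _ tr; rewrite -sum_size_colour_class.
apply: (@leq_trans (\sum_(i < d) (#|S| - 1))); last by rewrite sum_nat_const card_ord.
apply: leq_sum => i _; have [mgi [S0 _] _] := tr i.
by have := forest_size_lt_card mgi (tree_forest (tr i)) S0; lia.
Qed.

Lemma dtd_card_gt1 : 0 < d -> ~ is_K1 S E -> 1 < #|S|.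
Proof.
move=> d0 nK; case: dtdE => mg tr; have [_ [S0 _] _] := tr (Ordinal d0).
rewrite ltnNge; apply/negP => le1; apply: nK; split.
  by apply/eqP; rewrite eqn_leq le1 card_gt0.
case: E mg {tr} => [//|e s] mg; have [e1 e2 e12] := mg e.1 (mem_head _ _).
by move/card_le1_eqP: le1 => /(_ _ _ e1 e2) e12E; rewrite e12E eqxx in e12.
Qed.

Lemma dtd_low_degree : 0 < d ->
  exists2 v, v \in S & degree v [seq e.1 | e <- E] < 2 * d.
Proof.
move=> d0; case: (pickP [pred w in S | degree w [seq e.1 | e <- E] < 2 * d]).
  by move=> w /andP[]; exists w.
move=> high; have [mg tr] := dtdE; have [_ [S0 _] _] := tr (Ordinal d0).
have : \sum_(w in S) 2 * d <= \sum_(w in S) degree w [seq e.1 | e <- E].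
  by apply: leq_sum => w wS; move: (high w); rewrite /= wS /=; lia.
rewrite sum_nat_const sum_degree // size_map => sum_le; exfalso.
have S_pos : 0 < #|S| by rewrite card_gt0.
move: sum_le size_dtd_le (leq_pmulr d S_pos).
rewrite mulnBr muln1 mulnCA [#|S| * d]mulnC.
by move: (d * #|S|) (size E) => p s; lia.
Qed.

Variable v : V.
Hypotheses (vS : v \in S) (S0 : S :\ v != set0).

Lemma colour_class_delete_dtd_vertex i :
  colour_class (delete_dtd_vertex v E) i = delete_vertex v (colour_class E i).
Proof.
by rewrite colour_class_cat colour_class_bigcat (colour_class_filter (fun e => ~~ incident v e)).
Qed.

Lemma is_dtd_delete_vertex : is_dtd (S :\ v) (delete_dtd_vertex v E).
Proof.
have [_ tr] := dtdE.
have tri i : is_tree (S :\ v) (colour_class (delete_dtd_vertex v E) i).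
  by rewrite colour_class_delete_dtd_vertex; apply: is_tree_delete_vertex.
by split=> //; apply: multigraph_colour_classes => i; case: (tri i).
Qed.

Lemma size_incident_colour i :
  size (colour_class [seq e <- E | incident v e.1] i) =
  (size (colour_class (replaced_stars v E) i)).+1.
Proof.
have [_ tr] := dtdE; have := neighbours_neq_nil vS (tr i) S0.
rewrite colour_class_bigcat colour_class_filter size_filter -/(degree _ _).
rewrite -size_neighbours /neighbour_star; case: neighbours => //= u0 us _.
by rewrite size_map.
Qed.

Lemma size_incident : size [seq e <- E | incident v e.1] = d + size (replaced_stars v E).
Proof.
rewrite -!sum_size_colour_class.
under eq_bigr => i _ do rewrite size_incident_colour -add1n.
by rewrite big_split /= big_const_ord iter_addn_0 mul1n.
Qed.

Lemma dtree_ext_delete_vertex : size (replaced_stars v E) <= d - 1 ->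
  dtree_ext (size (replaced_stars v E)) (S :\ v) (delete_dtd_vertex v E) S E.
Proof.
move=> hj; have [mg tr] := dtdE.
exists v, (replaced_stars v E), [seq e <- E | ~~ incident v e.1],
  [seq e <- E | incident v e.1]; split.
- by rewrite setD11 (setD1K vS).
- by split; rewrite // -(perm_filterC (fun e => incident v e.1) E) perm_catC.
- by split; [|exact: size_incident].
- move=> e; rewrite mem_filter => /andP[ie eE]; have [e1 e2 e12] := mg e.1 (map_f _ eE).
  move: ie; rewrite /incident; case: (eqVneq e.1.1 v) => [ev|ev] /= => [_|e2v].
    by left; rewrite in_setD1 e2 andbT -ev eq_sym e12.
  by right; rewrite in_setD1 e1 ev.
move=> i.
have nb_ends w : w \in neighbours v (colour_class E i) ->
    w \in flatten [seq ends e | e <- colour_class [seq e <- E | incident v e.1] i].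
  move=> /mapP[h hf ->]; apply/flatten_mapP; exists h; last exact: other_end_ends.
  by rewrite colour_class_filter.
split.
- rewrite (leq_trans _ hj) // -(sum_size_colour_class (replaced_stars v E)).
  by rewrite (bigD1 i) //= leq_addr.
- exact: size_incident_colour.
move=> u /flatten_mapP[e]; rewrite colour_class_bigcat /neighbour_star.
have := neighbours_neq_nil vS (tr i) S0.
case: (neighbours v _) nb_ends => [|u0 us] // nb_ends _ /mapP[w wus ->].
by rewrite !inE => /orP[] /eqP ->; apply: nb_ends; rewrite inE ?eqxx // wus orbT.
Qed.

End DtreeDecomposition.

Theorem proposition3p4 (d : nat) (hd : 1 <= d) (V : finType)
  (Vs' : {set V}) (E' : seq (cedge V d)) :
  is_dtd Vs' E' -> ~ is_K1 Vs' E' ->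
  exists (Vs : {set V}) (E : seq (cedge V d)) (j : nat),
    [/\ is_dtd Vs E, j <= d - 1 & dtree_ext j Vs E Vs' E'].
Proof.
move=> dtd nK; have [v vS low] := dtd_low_degree dtd hd.
have S0 : Vs' :\ v != set0.
  by rewrite -card_gt0; move: (dtd_card_gt1 dtd hd nK); rewrite (cardsD1 v) vS.
have hj : size (replaced_stars v E') <= d - 1.
  by move: low; rewrite /degree count_map -size_filter (size_incident dtd vS S0); lia.
exists (Vs' :\ v), (delete_dtd_vertex v E'), (size (replaced_stars v E')).
by split; [exact: is_dtd_delete_vertex | | exact: dtree_ext_delete_vertex].
Qed.
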